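(* Let $\phi_*\in(0,\pi/2)$, $R\ge r=1$, and consider the billiard map $F$ on $Q(\phi_*,R)$. Let $x\in M_r$ with $n_1\ge1$, and assume that $p(F^{-1}x_0)\in\Gamma_r$ and $p(Fx_2)\in\Gamma_r$. Let $\tau_0=|p(x_0)p(x_1)|$, $\tau_1=|p(F^{n_1}x_1)p(x_2)|$ and $p=\frac{n_1}{n_1+1}$. If $$\tau_0<\tfrac23 d_0+p\,d_1\quad\text{and}\quad \tau_1<p\,d_1+\tfrac23 d_2,$$ then the orbit segment $(F^{-1}x_0,x_0,x_1,\dots,F^{n_1}x_1,x_2,Fx_2)$ is positively defocusing.
   Context: Setting: $r=1$, $Q(\phi_*,R)=D(O_r,r)\cap D(O_R,R)$ with $|O_rO_R|=\sqrt{R^2-r^2\sin^2\phi_*}-r\cos\phi_*$; boundary arcs $\Gamma_r\subset\partial D(O_r,r)$ (position angles $[\phi_*,2\pi-\phi_*]$) and $\Gamma_R\subset\partial D(O_R,R)$. Phase space $M=M_r\sqcup M_R$, coordinates $(\phi,\theta)$ with $\theta\in(0,\pi)$ the angle from the positive tangent direction; $p(x)$ the base point; $F$ the billiard map. $M_r^{out}=M_r\cap F^{-1}(M_R)$, $M_R^{out}=M_R\cap F^{-1}(M_r)$. For $x\in M_r$: $x_0=F^{n_0}x$ with $n_0=\inf\{n\ge0:F^nx\in M_r^{out}\}$, $x_1=Fx_0$, $n_1=\inf\{n\ge0:F^nx_1\in M_R^{out}\}$, $x_2=F^{n_1+1}x_1$; $d_0=r\sin\theta(x_0)$, $d_1=R\sin\theta(x_1)$,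 $d_2=r\sin\theta(x_2)$. Derivative: $D_xF=\frac1{d(Fx)}\begin{bmatrix}\tau-d(x)&\tau\\ \tau-d(x)-d(Fx)&\tau-d(Fx)\end{bmatrix}$ with $d(x)=\rho\sin\theta$ ($\rho$ the radius of the arc of $p(x)$), $\tau=|p(x)p(Fx)|$. A segment $(F^kx)_{m\le k\le n}$ is positively defocusing if all four entries of $D_{F^mx}F^{n-m}$ in $(\phi,\theta)$ coordinates are positive. *)

From Stdlib Require Import Reals Lra Lia.
Open Scope R_scope.

(* Coordinates: O_r = (0,0), O_R = (-|O_r O_R|, 0), so that the corners are
   (cos phi_star, +- sin phi_star), Gamma_r = position angles [phi_star, 2pi - phi_star]
   on the unit circle, Gamma_R = position angles [-psi_star, psi_star] on the big
   circle, with R sin psi_star = sin phi_star. Both arcs oriented counterclockwise. *)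

Inductive arc : Type := Arc_r | Arc_R.

(* a phase point: the arc carrying its base point, position angle phi on
   that arc's circle, angle theta from the positive tangent direction *)
Record phase : Type := mkPhase { ph_arc : arc; ph_phi : R; ph_theta : R }.

Definition dist_centers (phis Rb : R) : R :=
  sqrt (Rb ^ 2 - (sin phis) ^ 2) - cos phis.

Definition psis (phis Rb : R) : R := asin (sin phis / Rb).

Definition radius (Rb : R) (a : arc) : R :=
  match a with Arc_r => 1 | Arc_R => Rb end.

Definition center (phis Rb : R) (a : arc) : R * R :=
  match a with Arc_r => (0, 0) | Arc_R => (- dist_centers phis Rb, 0) end.

Definition bpos (phis Rb : R) (x : phase) : R * R :=
  let c := center phis Rb (ph_arc x) in
  (fst c + radius Rb (ph_arc x) * cos (ph_phi x),
   snd c + radius Rb (ph_arc x) * sin (ph_phi x)).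

(* phase space M = M_r + M_R (corners excluded: F is not defined there) *)
Definition in_M (phis Rb : R) (x : phase) : Prop :=
  0 < ph_theta x < PI /\
  match ph_arc x with
  | Arc_r => phis < ph_phi x < 2 * PI - phis
  | Arc_R => - psis phis Rb < ph_phi x < psis phis Rb
  end.

Definition in_Q (phis Rb : R) (p : R * R) : Prop :=
  (fst p) ^ 2 + (snd p) ^ 2 <= 1 /\
  (fst p + dist_centers phis Rb) ^ 2 + (snd p) ^ 2 <= Rb ^ 2.

(* outgoing unit velocity of x (tangent rotated by theta towards the inside) *)
Definition vel (x : phase) : R * R :=
  (- sin (ph_phi x + ph_theta x), cos (ph_phi x + ph_theta x)).

Definition normal (x : phase) : R * R := (cos (ph_phi x), sin (ph_phi x)).

Definition dot (u v : R * R) : R := fst u * fst v + snd u * snd v.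

Definition reflect (v n : R * R) : R * R :=
  (fst v - 2 * dot v n * fst n, snd v - 2 * dot v n * snd n).

Definition edist (p q : R * R) : R :=
  sqrt ((fst p - fst q) ^ 2 + (snd p - snd q) ^ 2).

(* bstep x y  <->  y = F x (billiard map, as its graph) *)
Definition bstep (phis Rb : R) (x y : phase) : Prop :=
  in_M phis Rb x /\ in_M phis Rb y /\
  exists tau : R, 0 < tau /\
    bpos phis Rb y = (fst (bpos phis Rb x) + tau * fst (vel x),
                     snd (bpos phis Rb x) + tau * snd (vel x)) /\
    (forall t, 0 <= t <= tau ->
       in_Q phis Rb (fst (bpos phis Rb x) + t * fst (vel x),
                     snd (bpos phis Rb x) + t * snd (vel x))) /\
    vel y = reflect (vel x) (normal y).

Definition dfun (Rb : R) (x : phase) : R := radius Rb (ph_arc x) * sin (ph_theta x).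

Record mat2 : Type := mkMat2 { m11 : R; m12 : R; m21 : R; m22 : R }.

Definition mat2_id : mat2 := mkMat2 1 0 0 1.

Definition mat2_mul (A B : mat2) : mat2 :=
  mkMat2 (m11 A * m11 B + m12 A * m21 B) (m11 A * m12 B + m12 A * m22 B)
         (m21 A * m11 B + m22 A * m21 B) (m21 A * m12 B + m22 A * m22 B).

(* D_x F in (phi, theta) coordinates, for y = F x (formula of the paper) *)
Definition DF (phis Rb : R) (x y : phase) : mat2 :=
  let tau := edist (bpos phis Rb x) (bpos phis Rb y) in
  let dx := dfun Rb x in
  let dy := dfun Rb y in
  mkMat2 ((tau - dx) / dy) (tau / dy) ((tau - dx - dy) / dy) ((tau - dy) / dy).

(* D_{s m} F^k along the orbit s (s (j+1) = F (s j)), by the chain rule *)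
Fixpoint Dseg (phis Rb : R) (s : nat -> phase) (m k : nat) : mat2 :=
  match k with
  | O => mat2_id
  | S k' => mat2_mul (DF phis Rb (s (m + k')%nat) (s (m + k' + 1)%nat))
                     (Dseg phis Rb s m k')
  end.

Definition pos_defocusing (phis Rb : R) (s : nat -> phase) (m n : nat) : Prop :=
  let A := Dseg phis Rb s m (n - m) in
  0 < m11 A /\ 0 < m12 A /\ 0 < m21 A /\ 0 < m22 A.

(* the segment (F^{-1} x0 = y, x0 = o n0, ..., o (n0+n1+2) = x2, F x2 = z),
   indexed 0 .. n1+4 *)
Definition orbit_seg (y : phase) (o : nat -> phase) (n0 n1 : nat) (z : phase)
  : nat -> phase :=
  fun k => match k with
           | O => y
           | S j => if (j <=? n1 + 2)%nat then o (n0 + j)%nat else z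
           end.

From Stdlib Require Import Reals Lra Lia.
Open Scope R_scope.

(* A billiard step between two points of the same circular arc is a
   chord: its length is tau = 2 rho sin theta and the reflection preserves
   sin theta.  Plugging tau = 2d into the derivative formula, such a step has
   derivative the shear [1 2; 0 1] and preserves d.  Hence along the orbit
     D F^{n1+4} = S_2 . B(tau1, d1, d2) . S_{2 n1} . B(tau0, d0, d1) . S_2,
   where S_t = [1 t; 0 1] and B(tau, dx, dy) is the derivative of a step from
   one arc to the other (the d along the n1 sliding steps on Gamma_R stays d1).

   Split the middle shear as S_{n1} . S_{n1}.  The hypothesis
   tau0 < 2/3 d0 + p d1 says exactly that S_{n1} . B(tau0,d0,d1) . S_2 has
   four negative entries, and tau1 < p d1 + 2/3 d2 says the same for
   S_2 . B(tau1,d1,d2) . S_{n1}; a product of two matrices with negative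
   entries has positive entries. *)

Definition shear (t : R) : mat2 := mkMat2 1 t 0 1.

Definition transition (tau dx dy : R) : mat2 :=
  mkMat2 ((tau - dx) / dy) (tau / dy) ((tau - dx - dy) / dy) ((tau - dy) / dy).

Definition mat2_pos (A : mat2) : Prop :=
  0 < m11 A /\ 0 < m12 A /\ 0 < m21 A /\ 0 < m22 A.

Definition mat2_neg (A : mat2) : Prop :=
  m11 A < 0 /\ m12 A < 0 /\ m21 A < 0 /\ m22 A < 0.

Lemma mat2_mul_assoc (A B C : mat2) :
  mat2_mul (mat2_mul A B) C = mat2_mul A (mat2_mul B C).
Proof. destruct A, B, C; unfold mat2_mul; simpl; f_equal; ring. Qed.

Lemma mat2_mul_id_l (A : mat2) : mat2_mul mat2_id A = A.
Proof. destruct A; unfold mat2_mul, mat2_id; simpl; f_equal; ring. Qed.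

Lemma mat2_mul_id_r (A : mat2) : mat2_mul A mat2_id = A.
Proof. destruct A; unfold mat2_mul, mat2_id; simpl; f_equal; ring. Qed.

Lemma shear_add (a b : R) : mat2_mul (shear a) (shear b) = shear (a + b).
Proof. unfold mat2_mul, shear; simpl; f_equal; ring. Qed.

Lemma mat2_mul_neg_neg (A B : mat2) :
  mat2_neg A -> mat2_neg B -> mat2_pos (mat2_mul A B).
Proof.
  destruct A, B; unfold mat2_neg, mat2_pos, mat2_mul; simpl.
  intros (? & ? & ? & ?) (? & ? & ? & ?); repeat split; nra.
Qed.

Lemma mat2_neg_div (l11 l12 l21 l22 b : R) :
  l11 < 0 -> l12 < 0 -> l21 < 0 -> l22 < 0 -> 0 < b ->
  mat2_neg (mkMat2 (l11 / b) (l12 / b) (l21 / b) (l22 / b)).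
Proof. intros; repeat split; simpl; apply Rdiv_neg_pos; assumption. Qed.

Lemma incoming_half_neg (n s a b : R) :
  0 <= n -> 0 < a -> 0 < b -> s < 2 / 3 * a + n / (n + 1) * b ->
  mat2_neg (mat2_mul (shear n) (mat2_mul (transition s a b) (shear 2))).
Proof.
  intros hn ha hb hs.
  assert (hs' : 3 * (n + 1) * s < 2 * (n + 1) * a + 3 * n * b).
  { replace (2 * (n + 1) * a + 3 * n * b)
      with (3 * (n + 1) * (2 / 3 * a + n / (n + 1) * b)) by (field; lra).
    apply Rmult_lt_compat_l; lra. }
  replace (mat2_mul (shear n) (mat2_mul (transition s a b) (shear 2))) with
    (mkMat2 (((n + 1) * (s - a) - n * b) / b) (((n + 1) * (3 * s - 2 * a) - 3 * n * b) / b)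
            ((s - a - b) / b) ((3 * s - 2 * a - 3 * b) / b))
    by (unfold mat2_mul, shear, transition; simpl; f_equal; field; lra).
  apply mat2_neg_div; nra.
Qed.

Lemma outgoing_half_neg (n t b c : R) :
  0 <= n -> 0 < b -> 0 < c -> t < n / (n + 1) * b + 2 / 3 * c ->
  mat2_neg (mat2_mul (shear 2) (mat2_mul (transition t b c) (shear n))).
Proof.
  intros hn hb hc ht.
  assert (ht' : 3 * (n + 1) * t < 3 * n * b + 2 * (n + 1) * c).
  { replace (3 * n * b + 2 * (n + 1) * c)
      with (3 * (n + 1) * (n / (n + 1) * b + 2 / 3 * c)) by (field; lra).
    apply Rmult_lt_compat_l; lra. }
  replace (mat2_mul (shear 2) (mat2_mul (transition t b c) (shear n))) with
    (mkMat2 ((3 * t - 3 * b - 2 * c) / c) (((n + 1) * (3 * t - 2 * c) - 3 * n * b) / c)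
            ((t - b - c) / c) (((n + 1) * (t - c) - n * b) / c))
    by (unfold mat2_mul, shear, transition; simpl; f_equal; field; lra).
  apply mat2_neg_div; nra.
Qed.

(* The algebraic core of the theorem: splitting S_{2n} = S_n . S_n, the full
   product is (outgoing half) . (incoming half), hence positive. *)
Lemma defocusing_product (n s t a b c : R) :
  0 <= n -> 0 < a -> 0 < b -> 0 < c ->
  s < 2 / 3 * a + n / (n + 1) * b -> t < n / (n + 1) * b + 2 / 3 * c ->
  mat2_pos (mat2_mul (mat2_mul (shear 2) (transition t b c))
                     (mat2_mul (shear (2 * n)) (mat2_mul (transition s a b) (shear 2)))).
Proof.
  intros hn ha hb hc hs ht.
  replace (2 * n) with (n + n) by ring. rewrite <- shear_add.
  replace (mat2_mul (mat2_mul (shear 2) (transition t b c))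
             (mat2_mul (mat2_mul (shear n) (shear n)) (mat2_mul (transition s a b) (shear 2))))
    with (mat2_mul (mat2_mul (shear 2) (mat2_mul (transition t b c) (shear n)))
                   (mat2_mul (shear n) (mat2_mul (transition s a b) (shear 2))))
    by (rewrite !mat2_mul_assoc; reflexivity).
  apply mat2_mul_neg_neg; [apply outgoing_half_neg | apply incoming_half_neg]; assumption.
Qed.

Lemma dot_normal_vel (x : phase) : dot (normal x) (vel x) = - sin (ph_theta x).
Proof.
  unfold dot, normal, vel; simpl. rewrite sin_plus, cos_plus.
  replace (cos (ph_phi x) * - (sin (ph_phi x) * cos (ph_theta x) + cos (ph_phi x) * sin (ph_theta x)) +
           sin (ph_phi x) * (cos (ph_phi x) * cos (ph_theta x) - sin (ph_phi x) * sin (ph_theta x)))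
    with (- sin (ph_theta x) * (Rsqr (sin (ph_phi x)) + Rsqr (cos (ph_phi x)))) by (unfold Rsqr; ring).
  rewrite sin2_cos2; ring.
Qed.

Lemma dot_unit_angle (u : R) : dot (cos u, sin u) (cos u, sin u) = 1.
Proof. unfold dot; simpl. rewrite <- (sin2_cos2 u); unfold Rsqr; ring. Qed.

Lemma dot_normal_normal (x : phase) : dot (normal x) (normal x) = 1.
Proof. apply dot_unit_angle. Qed.

Lemma dot_vel_vel (x : phase) : dot (vel x) (vel x) = 1.
Proof.
  unfold vel. rewrite <- (dot_unit_angle (ph_phi x + ph_theta x)); unfold dot; simpl; ring.
Qed.

Lemma dot_reflect (v n : R * R) : dot n n = 1 -> dot n (reflect v n) = - dot n v.
Proof.
  unfold dot, reflect; simpl; intros hn.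
  transitivity (dot n v - 2 * dot n v * (fst n * fst n + snd n * snd n));
    [unfold dot; ring | rewrite hn; unfold dot; ring].
Qed.

Lemma chord_of_circle (rho tau : R) (n n' v : R * R) :
  0 < rho -> 0 < tau -> dot n n = 1 -> dot n' n' = 1 -> dot v v = 1 ->
  rho * fst n' = rho * fst n + tau * fst v ->
  rho * snd n' = rho * snd n + tau * snd v ->
  tau = - 2 * rho * dot n v /\ dot n' v = - dot n v.
Proof.
  destruct n as [n1 n2], n' as [n1' n2'], v as [v1 v2]; unfold dot; simpl.
  intros hrho htau hn hn' hv e1 e2.
  assert (hsq : tau * (tau + 2 * rho * (n1 * v1 + n2 * v2)) = 0).
  { transitivity ((rho * n1 + tau * v1) ^ 2 + (rho * n2 + tau * v2) ^ 2
                  - rho ^ 2 * (n1 * n1 + n2 * n2) - tau ^ 2 * (v1 * v1 + v2 * v2 - 1)); [ring|].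
    rewrite <- e1, <- e2, hn, hv.
    transitivity (rho ^ 2 * (n1' * n1' + n2' * n2' - 1)); [ring | rewrite hn'; ring]. }
  assert (htau' : tau = - 2 * rho * (n1 * v1 + n2 * v2)).
  { destruct (Rmult_integral _ _ hsq); lra. }
  split; [exact htau'|].
  apply (Rmult_eq_reg_l rho); [|lra].
  transitivity ((rho * n1' ) * v1 + (rho * n2') * v2); [ring|].
  rewrite e1, e2.
  transitivity (rho * (n1 * v1 + n2 * v2) + tau * (v1 * v1 + v2 * v2)); [ring|].
  rewrite hv, htau'; ring.
Qed.

Lemma edist_along (p v : R * R) (t : R) :
  0 <= t -> dot v v = 1 -> edist p (fst p + t * fst v, snd p + t * snd v) = t.
Proof.
  intros ht hv; unfold edist; cbn [fst snd].
  replace ((fst p - (fst p + t * fst v)) ^ 2 + (snd p - (snd p + t * snd v)) ^ 2)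
    with (t ^ 2 * dot v v) by (unfold dot; ring).
  rewrite hv, Rmult_1_r; apply sqrt_pow2; exact ht.
Qed.

Section SameArcStep.

Variables phis Rb : R.
Hypothesis HRb : 1 <= Rb.

Lemma radius_pos (a : arc) : 0 < radius Rb a.
Proof. destruct a; simpl; lra. Qed.

Lemma dfun_pos (x : phase) : in_M phis Rb x -> 0 < dfun Rb x.
Proof.
  intros [[h1 h2] _]; unfold dfun.
  apply Rmult_lt_0_compat; [apply radius_pos | apply sin_gt_0; assumption].
Qed.

Lemma bpos_on_circle (x : phase) :
  bpos phis Rb x =
  (fst (center phis Rb (ph_arc x)) + radius Rb (ph_arc x) * fst (normal x),
   snd (center phis Rb (ph_arc x)) + radius Rb (ph_arc x) * snd (normal x)).
Proof. reflexivity. Qed.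

Lemma same_arc_step (x x' : phase) :
  bstep phis Rb x x' -> ph_arc x = ph_arc x' ->
  edist (bpos phis Rb x) (bpos phis Rb x') = 2 * dfun Rb x /\ dfun Rb x' = dfun Rb x.
Proof.
  intros (_ & _ & tau & htau & hpos & _ & hvel) harc.
  rewrite hpos, edist_along by (lra || apply dot_vel_vel).
  rewrite !bpos_on_circle, harc in hpos.
  pose proof (f_equal fst hpos) as e1; pose proof (f_equal snd hpos) as e2.
  cbn [fst snd] in e1, e2.
  destruct (chord_of_circle (radius Rb (ph_arc x')) tau (normal x) (normal x') (vel x))
    as [hchord hcos];
    [apply radius_pos | exact htau | apply dot_normal_normal | apply dot_normal_normal
    | apply dot_vel_vel | lra | lra |].
  assert (hsin : sin (ph_theta x') = sin (ph_theta x)).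
  { rewrite <- (Ropp_involutive (sin (ph_theta x'))), <- dot_normal_vel, hvel, dot_reflect,
      hcos, dot_normal_vel by apply dot_normal_normal. ring. }
  unfold dfun. rewrite hsin, harc, hchord, dot_normal_vel. split; ring.
Qed.

Lemma DF_same_arc (x x' : phase) :
  bstep phis Rb x x' -> ph_arc x = ph_arc x' -> DF phis Rb x x' = shear 2.
Proof.
  intros hstep harc.
  assert (hd : 0 < dfun Rb x) by (apply dfun_pos; apply hstep).
  destruct (same_arc_step x x' hstep harc) as [htau hd'].
  unfold DF, shear. rewrite htau, hd'. f_equal; field; lra.
Qed.

End SameArcStep.

Lemma DF_transition (phis Rb : R) (x y : phase) :
  DF phis Rb x y =
  transition (edist (bpos phis Rb x) (bpos phis Rb y)) (dfun Rb x) (dfun Rb y).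
Proof. reflexivity. Qed.

Lemma Dseg_S (phis Rb : R) (s : nat -> phase) (m k : nat) :
  Dseg phis Rb s m (S k) =
  mat2_mul (DF phis Rb (s (m + k)%nat) (s (S (m + k)))) (Dseg phis Rb s m k).
Proof. cbn [Dseg]. rewrite Nat.add_1_r. reflexivity. Qed.

Lemma Dseg_add (phis Rb : R) (s : nat -> phase) (m k l : nat) :
  Dseg phis Rb s m (k + l) = mat2_mul (Dseg phis Rb s (m + k) l) (Dseg phis Rb s m k).
Proof.
  induction l as [|l IH].
  - rewrite Nat.add_0_r. symmetry. apply mat2_mul_id_l.
  - rewrite Nat.add_succ_r, !Dseg_S, IH, mat2_mul_assoc, Nat.add_assoc. reflexivity.
Qed.

Lemma Dseg_two (phis Rb : R) (s : nat -> phase) (m : nat) :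
  Dseg phis Rb s m 2 = mat2_mul (DF phis Rb (s (S m)) (s (S (S m)))) (DF phis Rb (s m) (s (S m))).
Proof.
  rewrite !Dseg_S, Nat.add_0_r, Nat.add_1_r. cbn [Dseg]. rewrite mat2_mul_id_r. reflexivity.
Qed.

Lemma sliding_block (phis Rb : R) (s : nat -> phase) (m n : nat) :
  1 <= Rb ->
  (forall k, (k < n)%nat ->
     bstep phis Rb (s (m + k)%nat) (s (S (m + k))) /\
     ph_arc (s (m + k)%nat) = ph_arc (s (S (m + k)))) ->
  Dseg phis Rb s m n = shear (2 * INR n) /\ dfun Rb (s (m + n)%nat) = dfun Rb (s m).
Proof.
  intros HRb. induction n as [|n IH]; intros hslide.
  - rewrite Nat.add_0_r. split; [cbn [Dseg INR]; unfold shear, mat2_id; f_equal; ring | reflexivity].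
  - destruct IH as [hD hd]; [intros k hk; apply hslide; lia|].
    destruct (hslide n ltac:(lia)) as [hstep harc].
    rewrite Dseg_S, hD, (DF_same_arc phis Rb HRb _ _ hstep harc), shear_add, S_INR.
    split; [f_equal; ring|].
    rewrite <- plus_n_Sm, (proj2 (same_arc_step phis Rb HRb _ _ hstep harc)).
    exact hd.
Qed.

Lemma arc_constant (f : nat -> arc) (a n : nat) :
  f a = Arc_R ->
  (forall k, (k < n)%nat -> ~ (f (a + k)%nat = Arc_R /\ f (S (a + k)) = Arc_r)) ->
  forall k, (k <= n)%nat -> f (a + k)%nat = Arc_R.
Proof.
  intros ha hstay. induction k as [|k IH]; intros hk.
  - rewrite Nat.add_0_r. exact ha.
  - rewrite <- plus_n_Sm.
    destruct (f (S (a + k))) eqn:e; [|reflexivity].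
    exfalso. apply (hstay k ltac:(lia)). split; [apply IH; lia | exact e].
Qed.

Lemma orbit_seg_inner (y : phase) (o : nat -> phase) (n0 n1 : nat) (z : phase) (j : nat) :
  (j <= n1 + 2)%nat -> orbit_seg y o n0 n1 z (S j) = o (n0 + j)%nat.
Proof.
  intros hj. unfold orbit_seg. apply Nat.leb_le in hj. rewrite hj. reflexivity.
Qed.

Lemma orbit_seg_last (y : phase) (o : nat -> phase) (n0 n1 : nat) (z : phase) :
  orbit_seg y o n0 n1 z (S (S (S (S n1)))) = z.
Proof.
  unfold orbit_seg. replace (S (S (S n1)) <=? n1 + 2)%nat with false; [reflexivity|].
  symmetry. apply Nat.leb_gt. lia.
Qed.

(* Along x1, ..., F^{n1} x1 the orbit slides on Gamma_R, by minimality of n1;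
   in the indexed segment this block has derivative S_{2 n1} and keeps d = d1. *)
Lemma sliding_on_Gamma_R (phis Rb : R) (o : nat -> phase) (n0 n1 : nat) (y z : phase) :
  1 <= Rb ->
  (forall k : nat, (k < n0 + n1 + 2)%nat -> bstep phis Rb (o k) (o (S k))) ->
  ph_arc (o (S n0)) = Arc_R ->
  (forall k : nat, (k < n1)%nat ->
     ~ (ph_arc (o (n0 + 1 + k)%nat) = Arc_R /\ ph_arc (o (n0 + 2 + k)%nat) = Arc_r)) ->
  Dseg phis Rb (orbit_seg y o n0 n1 z) 2 n1 = shear (2 * INR n1) /\
  dfun Rb (o (n0 + 1 + n1)%nat) = dfun Rb (o (n0 + 1)%nat).
Proof.
  intros HRb Horbit Hx1 Hstay.
  set (s := orbit_seg y o n0 n1 z).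
  assert (onR : forall k, (k <= n1)%nat -> ph_arc (o (n0 + 1 + k)%nat) = Arc_R).
  { apply (arc_constant (fun j => ph_arc (o j))); [rewrite Nat.add_1_r; exact Hx1|].
    intros k hk. replace (S (n0 + 1 + k)) with (n0 + 2 + k)%nat by lia. exact (Hstay k hk). }
  assert (s_slide : forall k, (k <= n1)%nat -> s (2 + k)%nat = o (n0 + 1 + k)%nat).
  { intros k hk. unfold s. rewrite (orbit_seg_inner _ _ _ _ _ (1 + k)) by lia. f_equal; lia. }
  destruct (sliding_block phis Rb s 2 n1 HRb) as [Hslide Hd1].
  { intros k hk. replace (S (2 + k)) with (2 + S k)%nat by lia.
    rewrite !s_slide by lia. split.
    - replace (n0 + 1 + S k)%nat with (S (n0 + 1 + k)) by lia. apply Horbit; lia.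
    - rewrite !onR by lia. reflexivity. }
  split; [exact Hslide|].
  change (s 2%nat) with (s (2 + 0)%nat) in Hd1.
  rewrite !s_slide, Nat.add_0_r in Hd1 by lia. exact Hd1.
Qed.

Theorem mainTheorem9 (phis Rb : R) (o : nat -> phase) (n0 n1 : nat)
    (y z : phase) :
  0 < phis < PI / 2 -> 1 <= Rb ->
  ph_arc (o 0%nat) = Arc_r ->
  (forall k : nat, (k < n0 + n1 + 2)%nat -> bstep phis Rb (o k) (o (S k))) ->
  ph_arc (o n0) = Arc_r -> ph_arc (o (S n0)) = Arc_R ->
  (forall k : nat, (k < n0)%nat ->
     ~ (ph_arc (o k) = Arc_r /\ ph_arc (o (S k)) = Arc_R)) ->
  ph_arc (o (n0 + 1 + n1)%nat) = Arc_R -> ph_arc (o (n0 + n1 + 2)%nat) = Arc_r ->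
  (forall k : nat, (k < n1)%nat ->
     ~ (ph_arc (o (n0 + 1 + k)%nat) = Arc_R /\ ph_arc (o (n0 + 2 + k)%nat) = Arc_r)) ->
  (1 <= n1)%nat ->
  bstep phis Rb y (o n0) -> ph_arc y = Arc_r ->
  bstep phis Rb (o (n0 + n1 + 2)%nat) z -> ph_arc z = Arc_r ->
  let tau0 := edist (bpos phis Rb (o n0)) (bpos phis Rb (o (n0 + 1)%nat)) in
  let tau1 := edist (bpos phis Rb (o (n0 + 1 + n1)%nat)) (bpos phis Rb (o (n0 + n1 + 2)%nat)) in
  let p := INR n1 / (INR n1 + 1) in
  let d0 := dfun Rb (o n0) in
  let d1 := dfun Rb (o (n0 + 1)%nat) in
  let d2 := dfun Rb (o (n0 + n1 + 2)%nat) in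
  tau0 < 2 / 3 * d0 + p * d1 ->
  tau1 < p * d1 + 2 / 3 * d2 ->
  pos_defocusing phis Rb (orbit_seg y o n0 n1 z) 0 (n1 + 4).
Proof.
  intros _ HRb _ Horbit Hx0 Hx1 _ _ Hx2 Hstay _ Hy Hyr Hz Hzr
    tau0 tau1 p d0 d1 d2 Hin Hout.
  destruct (sliding_on_Gamma_R phis Rb o n0 n1 y z HRb Horbit Hx1 Hstay) as [Hslide Hd1].
  (* cut the segment as 2 + n1 + 2 steps and identify each factor *)
  unfold pos_defocusing. replace (n1 + 4 - 0)%nat with (2 + n1 + 2)%nat by lia.
  rewrite !Dseg_add, !Dseg_two. cbn [Nat.add]. rewrite Hslide.
  set (s := orbit_seg y o n0 n1 z).
  assert (s_at : forall j k, (j <= n1 + 2)%nat -> k = (n0 + j)%nat -> s (S j) = o k).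
  { intros j k hj ->. apply orbit_seg_inner; exact hj. }
  rewrite (s_at 0%nat n0), (s_at 1%nat (n0 + 1)%nat), (s_at (S n1) (n0 + 1 + n1)%nat),
    (s_at (S (S n1)) (n0 + n1 + 2)%nat) by lia.
  replace (s (S (S (S (S n1))))) with z by (symmetry; apply orbit_seg_last).
  replace (s 0%nat) with y by reflexivity.
  (* y -> x0 and x2 -> F x2 are chords of Gamma_r; the sliding block kept d = d1 *)
  rewrite (DF_same_arc phis Rb HRb y), (DF_same_arc phis Rb HRb _ z),
    (DF_transition _ _ (o (n0 + 1 + n1)%nat)), Hd1
    by (assumption || congruence).
  assert (hd0 : 0 < d0) by (apply (dfun_pos phis Rb HRb); apply Hy).
  assert (hd1 : 0 < d1) by (apply (dfun_pos phis Rb HRb); apply (Horbit (n0 + 1)%nat); lia).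
  assert (hd2 : 0 < d2) by (apply (dfun_pos phis Rb HRb); apply Hz).
  apply defocusing_product; [apply pos_INR | assumption ..].
Qed.
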